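(* Let $f=\min_{1\le j\le m}\{a_j+\sum_{i=1}^n t_{j,i}X_i\}$ be a tropical polynomial in $n$ variables, and for $N\ge 1$ let $U_N\subset\mathbb{R}^{N^n}$ be the set of points satisfying all linearizations of $f$ on the grid $T_N$. Then for every partition of the grid $T_N$ into subgrids that are cubes with sides $q_1,\dots,q_R$ one has $\dim(U_N)\le \dim(U_{q_1})+\dots+\dim(U_{q_R})$. Consequently the limit $$H(f):=\lim_{N\to\infty}\frac{\dim(U_N)}{N^n}$$ exists and equals $\inf_{N\ge 1}\dim(U_N)/N^n$.
   Context: A tropical polynomial in $n$ variables is an expression $f=\min_{1\le j\le m}\{a_j+\sum_{i=1}^n t_{j,i}X_i\}$ with $a_j\in\mathbb{R}$ and pairwise distinct exponent vectors $(t_{j,1},\dots,t_{j,n})\in\mathbb{Z}^n$. For an integer $N\ge1$ let $T_N=\{0,\dots,N-1\}^n\subset\mathbb{Z}^n$, and consider variables $u(k_1,\dots,k_n)$, $(k_1,\dots,k_n)\in T_N$, so that points $u$ lie in $\mathbb{R}^{T_N}\cong\mathbb{R}^{N^n}$. For each shift $(s_1,\dots,s_n)\in\mathbb{Z}^n$ such that $(t_{j,1}+s_1,\dots,t_{j,n}+s_n)\in T_N$ for all $1\le j\le m$, the linearization of $f$ with this shift is the tropical linear form $\min_{1\le j\le m}\{a_j+u(t_{j,1}+s_1,\dots,t_{j,n}+s_n)\}$; a point $u$ satisfies it if this minimum is attained at least twice. $U_N$ is the set of all $u\in\mathbb{R}^{N^n}$ satisfying all such linearizations; it is a finite union of convex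 polyhedra and $\dim$ denotes its dimension (maximal dimension of a polyhedron in it). A subgrid with side $q$ is a translate $v+T_q\subset T_N$, identified with $T_q$ via the translation. *)

From HB Require Import structures.
From mathcomp Require Import all_boot all_order all_algebra.
From mathcomp Require Import all_classical all_reals all_analysis.
Set Implicit Arguments. Unset Strict Implicit. Unset Printing Implicit Defensive.
Import Order.TTheory GRing.Theory Num.Theory.
Local Open Scope classical_set_scope.
Local Open Scope ring_scope.

Section Trop.
Variable R : realType.

Definition polyhedron (T : finType) (P : set (T -> R)) : Prop :=
  exists (r : nat) (A : 'I_r -> T -> R) (b : 'I_r -> R),
    P = [set x | forall i : 'I_r, \sum_(t : T) A i t * x t <= b i].

Definition aff_indep (T : finType) (k : nat) (p : 'I_k.+1 -> T -> R) : Prop :=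
  forall c : 'I_k.+1 -> R,
    \sum_(i < k.+1) c i = 0 ->
    (forall t : T, \sum_(i < k.+1) c i * p i t = 0) ->
    forall i, c i = 0.

(* a convex set has dimension >= k iff it contains k+1 affinely independent
   points (dimension of its affine hull) *)
Definition dim_ge (T : finType) (P : set (T -> R)) (k : nat) : Prop :=
  exists p : 'I_k.+1 -> T -> R, (forall i, P (p i)) /\ aff_indep p.

(* dim S = maximal dimension of a convex polyhedron contained in S
   (convention: dim of the empty set is 0) *)
Definition dimS (T : finType) (S : set (T -> R)) : nat :=
  \max_(k < #|T|.+1 |
        `[< exists P : set (T -> R), polyhedron P /\ P `<=` S /\ dim_ge P k >]) k.

Definition grid (n N : nat) := {ffun 'I_n -> 'I_N}.

(* value of u : R^{T_N} at the integer point v (0 outside the grid; only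
   used at points of the grid) *)
Definition at_pt (n N : nat) (u : grid n N -> R) (v : 'I_n -> int) : R :=
  if [pick x : grid n N | [forall i, ((x i : nat)%:Z == v i)]] is Some x
  then u x else 0.

Definition admissible_shift (n m N : nat) (t : 'I_m -> 'I_n -> int)
    (s : 'I_n -> int) : Prop :=
  forall (j : 'I_m) (i : 'I_n), (0 <= t j i + s i) /\ (t j i + s i < N%:Z).

(* u satisfies the linearization of f = min_j {a_j + <t_j, X>} with shift s:
   the minimum of a_j + u(t_j + s) is attained at least twice *)
Definition satisfies_lin (n m N : nat) (a : 'I_m -> R) (t : 'I_m -> 'I_n -> int)
    (s : 'I_n -> int) (u : grid n N -> R) : Prop :=
  let val j := a j + at_pt u (fun i => t j i + s i) in
  exists j1 j2 : 'I_m, j1 != j2 /\ val j1 = val j2 /\ (forall j, val j1 <= val j).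

Definition U_set (n m : nat) (a : 'I_m -> R) (t : 'I_m -> 'I_n -> int) (N : nat)
    : set (grid n N -> R) :=
  [set u | forall s, @admissible_shift n m N t s -> satisfies_lin a t s u].

Definition dimU (n m : nat) (a : 'I_m -> R) (t : 'I_m -> 'I_n -> int) (N : nat)
    : nat := dimS (@U_set n m a t N).

End Trop.

(* Let P be a polyhedron inside U_N through affinely independent
   points p_0, ..., p_k; its edge vectors p_i - p_0 span a k-dimensional space E.
   Restriction of functions to a subgrid v + T_q maps U_N into U_q, since every
   linearization on T_q is a linearization on T_N.  When the subgrids cover T_N
   the restriction maps are jointly injective on E, so k is at most the sum of
   the dimensions of the restricted images of E.  Each such image has a basis Y
   of restricted edges, and the simplex spanned by Y at the restriction of p_0
   is the restriction of a part of P; being a polyhedron inside U_q, it bounds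
   the dimension of the image by dim U_q.

   Tiling T_N by cubes of side M plus unit cubes on the boundary
   layer gives dim U_N / N^n <= dim U_M / M^n + n M / N, and such an estimate
   forces convergence of the normalized dimensions to their infimum. *)

From HB Require Import structures.
From mathcomp Require Import all_boot all_order all_algebra zify.
From mathcomp Require Import all_classical all_reals all_analysis.
Import Order.TTheory GRing.Theory Num.Theory.
Local Open Scope classical_set_scope.
Local Open Scope ring_scope.
Set Implicit Arguments. Unset Strict Implicit. Unset Printing Implicit Defensive.

Section LinearAlgebra.
Variables (K : fieldType) (vT : vectType K).

Fixpoint greedy_basis (X : seq vT) : seq vT :=
  if X is x :: X' then
    if x \in <<greedy_basis X'>>%VS then greedy_basis X' else x :: greedy_basis X'
  else [::].

Lemma greedy_basis_sub X : {subset greedy_basis X <= X}.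
Proof.
elim: X => [|x X IH] //= y; case: ifP => _.
  by move=> /IH; rewrite inE orbC => ->.
by rewrite !inE => /orP[->|/IH ->] //; rewrite orbT.
Qed.

Lemma greedy_basis_free X : free (greedy_basis X).
Proof.
elim: X => [|x X IH] /=; first exact: nil_free.
by case: ifP => hx //; rewrite free_cons hx IH.
Qed.

Lemma size_greedy_basis X : size (greedy_basis X) = \dim <<X>>.
Proof.
have spanX : (<<X>> <= <<greedy_basis X>>)%VS.
  elim: X => [|x X IH] /=; first by rewrite span_nil sub0v.
  rewrite span_cons; case: ifP => hx; first by rewrite subv_add -memvE hx.
  by rewrite span_cons addvS.
have spanG : (<<greedy_basis X>> <= <<X>>)%VS.
  by apply/span_subvP => y /greedy_basis_sub /memv_span.
by rewrite -(eqP (greedy_basis_free X)); apply/eqP; rewrite eqn_leq !dimvS.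
Qed.

(* If the linear maps f j are jointly injective on U, then U is no bigger than
   the sum of its images: induct on the list of maps, keeping track of the
   common kernel of the maps already used. *)
Lemma dim_le_sum_limg (J : finType) (W : J -> vectType K)
    (f : forall j, 'Hom(vT, W j)) (U : {vspace vT}) :
  (forall u, u \in U -> (forall j, f j u = 0) -> u = 0) ->
  (\dim U <= \sum_j \dim (f j @: U))%N.
Proof.
move=> f_inj; pose Ker := foldr (fun j V => lker (f j) :&: V)%VS fullv.
have step s : (\dim U <= \dim (U :&: Ker s) + \sum_(j <- s) \dim (f j @: U))%N.
  elim: s => [|j s IH] /=; first by rewrite capvf big_nil addn0.
  rewrite big_cons; apply: (leq_trans IH).
  rewrite -(limg_ker_dim (f j) (U :&: Ker s)) addnA leq_add2r.
  rewrite -capvA [(Ker s :&: _)%VS]capvC capvA leq_add2l.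
  by rewrite dimvS // limgS // capvSl.
have kerU : \dim (U :&: Ker (index_enum J)) = 0%N.
  apply/eqP; rewrite dimv_eq0 -subv0; apply/subvP => u.
  rewrite memv_cap memv0 => /andP[uU uK]; apply/eqP; apply: f_inj => // j.
  have : j \in index_enum J by rewrite mem_index_enum.
  elim: (index_enum J) uK => //= j' s IHs; rewrite memv_cap => /andP[u_ker_j' u_ker_s].
  by rewrite inE => /orP[/eqP->|/IHs]; [apply/eqP; rewrite -memv_ker|apply].
by have := step (index_enum J); rewrite kerU.
Qed.

End LinearAlgebra.

Section AffineGeometry.
Variables (R : realType) (B : finType).
Local Notation V := {ffun B -> R^o}.

Lemma scaleRoE (a b : R^o) : a *: b = a * b. Proof. by []. Qed.

Definition delta_vec (b : B) : V := [ffun s => (s == b)%:R].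

Lemma scalar_expand (L : V -> R) : scalar L ->
  forall u : V, L u = \sum_b L (delta_vec b) * u b.
Proof.
move=> Ls u; have L0 : L 0 = 0.
  have := Ls 1 0 0; rewrite scaler0 addr0 mul1r => /(congr1 (fun y => y - L 0)).
  by rewrite addrK subrr.
have uE : u = \sum_b u b *: delta_vec b.
  apply/ffunP => s; rewrite sum_ffunE (bigD1 s) //= big1 => [|b bs].
    by rewrite !ffunE eqxx scaleRoE mulr1 addr0.
  by rewrite !ffunE eq_sym (negPf bs) scaleRoE mulr0.
rewrite {1}uE; elim/big_rec2: _ => [|b y1 y2 _ <-]; first by rewrite L0.
by rewrite Ls mulrC.
Qed.

Lemma polyhedron_scalar_ineqs (J : finType) (L : J -> V -> R) (c : J -> R)
    (w0 : B -> R) :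
  (forall j, scalar (L j)) ->
  polyhedron [set x : B -> R | forall j, L j (finfun x - finfun w0) <= c j].
Proof.
move=> Ls; pose A j b := L j (delta_vec b).
exists #|J|, (fun i => A (enum_val i)),
  (fun i => c (enum_val i) + \sum_b A (enum_val i) b * w0 b).
have LE j x : L j (finfun x - finfun w0) = \sum_b A j b * x b - \sum_b A j b * w0 b.
  by rewrite scalar_expand // -sumrB; apply: eq_bigr => b _; rewrite !ffunE mulrBr.
apply/seteqP; split => x /= Hx.
  by move=> i; rewrite -lerBlDr -LE.
by move=> j; rewrite LE lerBlDr; have := Hx (enum_rank j); rewrite enum_rankK.
Qed.

Lemma polyhedron_convex (I : finType) (P : set (B -> R)) (x : I -> B -> R)
    (mu : I -> R) :
  polyhedron P -> (forall i, 0 <= mu i) -> \sum_i mu i = 1 -> (forall i, P (x i)) ->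
  P (fun b => \sum_i mu i * x i b).
Proof.
move=> [r [A [c ->]]] mu0 mu1 Px /= k.
have -> : \sum_b A k b * (\sum_i mu i * x i b) = \sum_i mu i * (\sum_b A k b * x i b).
  under eq_bigr do rewrite mulr_sumr.
  rewrite exchange_big /=; apply: eq_bigr => i _; rewrite mulr_sumr.
  by apply: eq_bigr => b _; rewrite mulrCA.
apply: (@le_trans _ _ (\sum_i mu i * c k)).
  by apply: ler_sum => i _; apply: ler_wpM2l => //; apply: Px.
by rewrite -mulr_suml mu1 mul1r.
Qed.

Lemma sum_unlift (Z : nmodType) k (F : option 'I_k -> Z) :
  \sum_(j < k.+1) F (unlift ord0 j) = F None + \sum_(i < k) F (Some i).
Proof.
rewrite big_ord_recl unlift_none; congr (_ + _).
by apply: eq_bigr => i _; rewrite liftK.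
Qed.

Lemma polyhedron_simplex_comb (P : set (B -> R)) s (p0 : B -> R)
    (q : 'I_s -> B -> R) (lam : 'I_s -> R) :
  polyhedron P -> P p0 -> (forall i, P (q i)) ->
  (forall i, 0 <= lam i) -> \sum_i lam i <= 1 ->
  P (fun b => p0 b + \sum_i lam i * (q i b - p0 b)).
Proof.
move=> Ppoly Pp0 Pq lam0 lam1.
pose mu o := if o is Some i then lam i else 1 - \sum_i lam i.
pose x o := if o is Some i then q i else p0.
have -> : (fun b => p0 b + \sum_i lam i * (q i b - p0 b)) =
          (fun b => \sum_(j < s.+1) mu (unlift ord0 j) * x (unlift ord0 j) b).
  apply: funext => b; rewrite (sum_unlift (fun o => mu o * x o b)) /=.
  under eq_bigr do rewrite mulrBr.
  by rewrite sumrB -mulr_suml mulrBl mul1r addrA addrAC.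
apply: polyhedron_convex => //.
- by move=> j; case: (unlift ord0 j) => [i|] /=; rewrite ?subr_ge0.
- by rewrite (sum_unlift mu) /= subrK.
- by move=> j; case: (unlift ord0 j).
Qed.

Definition edges k (p : 'I_k.+1 -> B -> R) : k.-tuple V :=
  [tuple [ffun b => p (lift ord0 i) b - p ord0 b] | i < k].

Lemma edgesE k (p : 'I_k.+1 -> B -> R) (i : 'I_k) :
  (edges p)`_i = [ffun b => p (lift ord0 i) b - p ord0 b].
Proof. by rewrite -tnth_nth tnth_mktuple. Qed.

Lemma aff_indep_edges_free k (p : 'I_k.+1 -> B -> R) :
  aff_indep p -> free (edges p).
Proof.
move=> p_ind; apply/freeP => c c_edges i.
pose F o := if o is Some i then c i else - \sum_i c i.
pose G o := if o is Some i then p (lift ord0 i) else p ord0.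
have pG j : p j = G (unlift ord0 j).
  by case: (unliftP ord0 j) => [i' ->|->]; rewrite /G ?liftK ?unlift_none.
have := p_ind (fun j => F (unlift ord0 j)); rewrite sum_unlift /F /= addNr.
move=> /(_ erefl _ (lift ord0 i)); rewrite liftK; apply => b.
under eq_bigr do rewrite pG.
rewrite (sum_unlift (fun o => F o * G o b)) /F /G /=.
have := congr1 (fun f : V => f b) c_edges; rewrite sum_ffunE ffunE => edges_b.
rewrite -[RHS]edges_b; under [RHS]eq_bigr do rewrite ffunE edgesE ffunE scaleRoE mulrBr.
by rewrite sumrB mulNr mulr_suml addrC.
Qed.

Lemma aff_indep_le_card k (p : 'I_k.+1 -> B -> R) : aff_indep p -> (k <= #|B|)%N.
Proof.
move=> /aff_indep_edges_free/eqP free_p.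
have := dimvS (subvf <<edges p>>%VS).
by rewrite dimvf /dim /= muln1 free_p size_tuple.
Qed.

Lemma dimS_ge (S P : set (B -> R)) k (p : 'I_k.+1 -> B -> R) :
  polyhedron P -> P `<=` S -> (forall j, P (p j)) -> aff_indep p ->
  (k <= dimS S)%N.
Proof.
move=> Ppoly PS Pp p_ind; have kB : (k < #|B|.+1)%N.
  by rewrite ltnS; exact: aff_indep_le_card p_ind.
rewrite /dimS; apply: (@leq_bigmax_cond _ _ (fun k : 'I__ => (k : nat)) (Ordinal kB)).
by apply/asboolP; exists P; split => //; split => //; exists p.
Qed.

Lemma dimS_le (S : set (B -> R)) d :
  (forall k (P : set (B -> R)) (p : 'I_k.+1 -> B -> R),
     polyhedron P -> P `<=` S -> (forall j, P (p j)) -> aff_indep p -> (k <= d)%N) ->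
  (dimS S <= d)%N.
Proof.
move=> bound; apply/bigmax_leqP => k /asboolP [P [Ppoly [PS [p [Pp p_ind]]]]].
exact: bound Ppoly PS Pp p_ind.
Qed.

Definition simplex_vertex (w0 : B -> R) (Y : seq V) : 'I_(size Y).+1 -> B -> R :=
  fun j b => if unlift ord0 j is Some i then w0 b + Y`_i b else w0 b.
Arguments simplex_vertex : clear implicits.

Lemma simplex_vertex_aff_indep (w0 : B -> R) (Y : seq V) :
  free Y -> aff_indep (simplex_vertex w0 Y).
Proof.
move=> free_Y; have /freeP freeY := (free_Y : free (in_tuple Y)).
move=> c c_sum c_comb.
have c_lift (i : 'I_(size Y)) : c (lift ord0 i) = 0.
  apply: (freeY (fun i => c (lift ord0 i))); apply/ffunP => b.
  have := c_comb b; rewrite big_ord_recl /simplex_vertex unlift_none.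
  under eq_bigr do rewrite liftK.
  move: c_sum; rewrite big_ord_recl => /eqP; rewrite addr_eq0 => /eqP ->.
  rewrite mulNr mulr_suml -sumrN -big_split /=.
  under eq_bigr do rewrite mulrDr addKr.
  move=> comb0; rewrite sum_ffunE ffunE -[RHS]comb0.
  by apply: eq_bigr => l _; rewrite ffunE scaleRoE.
move=> j; case: (unliftP ord0 j) => [i ->|->]; first exact: c_lift.
by move: c_sum; rewrite big_ord_recl big1 ?addr0 // => i _; exact: c_lift.
Qed.

End AffineGeometry.
Arguments simplex_vertex {R B} w0 Y.

Section Simplex.
Variables (R : realType) (B : finType) (w0 : B -> R) (Y : seq {ffun B -> R^o}).
Hypothesis free_Y : free Y.
Local Notation V := {ffun B -> R^o}.
Local Notation X := (in_tuple Y).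

(* The component of u transverse to <<Y>>; it vanishes exactly on <<Y>>. *)
Definition transverse (u : V) : V := u - \sum_i coord X i u *: Y`_i.

Lemma transverse_linear : linear transverse.
Proof.
move=> c u w; rewrite /transverse.
under eq_bigr do rewrite linearP scalerDl -scalerA.
by rewrite big_split /= -scaler_sumr scalerBr opprD addrACA.
Qed.

Lemma transverse_span u : u \in <<Y>>%VS -> transverse u = 0.
Proof. by move=> uY; rewrite /transverse {1}(@coord_span _ _ _ X u uY) subrr. Qed.

(* w0 + conv(0, Y_1, ..., Y_k), in coordinates relative to Y. *)
Definition simplex : set (B -> R) :=
  [set x | let z := finfun x - finfun w0 in
    [/\ transverse z = 0, forall i, 0 <= coord X i z & \sum_i coord X i z <= 1]].

(* Each defining condition is a linear inequality in z; the equation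
   transverse z = 0 counts as two inequalities per coordinate. *)
Lemma simplex_polyhedron : polyhedron simplex.
Proof.
pose L (j : (B + B) + ('I_(size Y) + unit)) (u : V) : R := match j with
  | inl (inl b) => transverse u b
  | inl (inr b) => - transverse u b
  | inr (inl i) => - coord X i u
  | inr (inr _) => \sum_i coord X i u end.
pose c (j : (B + B) + ('I_(size Y) + unit)) : R :=
  if j is inr (inr _) then 1 else 0.
have Ls j : scalar (L j).
  case: j => [[b|b]|[i|[]]] a u w /=.
  - by rewrite transverse_linear !ffunE ?scaleRoE.
  - by rewrite transverse_linear !ffunE ?scaleRoE opprD mulrN.
  - by rewrite linearP ?scaleRoE opprD mulrN.
  - under eq_bigr do rewrite linearP ?scaleRoE.
    by rewrite big_split /= mulr_sumr.
suff -> : simplex = [set x | forall j, L j (finfun x - finfun w0) <= c j].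
  exact: polyhedron_scalar_ineqs.
apply/seteqP; split => x /=.
  move=> [z0 c0 c1] [[b|b]|[i|[]]] /=; rewrite ?z0 ?ffunE ?oppr0 //.
  by rewrite oppr_le0; apply: c0.
move=> Lx; split; last exact: Lx (inr (inr tt)).
  apply/ffunP => b; have := Lx (inl (inl b)); have := Lx (inl (inr b)).
  by rewrite /= oppr_le0 [RHS]ffunE => ge0 le0; apply/eqP; rewrite eq_le le0 ge0.
by move=> i; rewrite -oppr_le0; exact: Lx (inr (inl i)).
Qed.

Lemma simplex_vertexP j : simplex (simplex_vertex w0 Y j).
Proof.
have c0 k : coord X k 0 = 0 by rewrite linear0.
rewrite /simplex /simplex_vertex /=.
case: (unliftP ord0 j) => [i|] _.
  have -> : finfun (fun b => w0 b + Y`_i b) - finfun w0 = Y`_i.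
    by apply/ffunP => b; rewrite !ffunE addrC addKr.
  have cY k : coord X k Y`_i = (i == k)%:R by apply: coord_free.
  split; first by rewrite transverse_span // memv_span // mem_nth.
    by move=> k; rewrite cY ler0n.
  by rewrite (bigD1 i) //= big1 => [|k ki]; rewrite cY ?eqxx ?addr0 // eq_sym (negPf ki).
have -> : finfun w0 - finfun w0 = 0 :> V by rewrite subrr.
split; first by rewrite transverse_span ?mem0v.
  by move=> k; rewrite c0.
by rewrite big1 ?ler01.
Qed.

Lemma simplexP x : simplex x ->
  exists2 lam : 'I_(size Y) -> R, (forall i, 0 <= lam i) /\ \sum_i lam i <= 1 &
    x = (fun b => w0 b + \sum_i lam i * Y`_i b).
Proof.
move=> [z0 c0 c1]; exists (fun i => coord X i (finfun x - finfun w0)) => //.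
apply: funext => b; move/eqP: z0; rewrite subr_eq0 => /eqP/(congr1 (fun f : V => f b)).
rewrite sum_ffunE !ffunE => xb; rewrite -[x b](subrK (w0 b)) xb addrC.
by congr (_ + _); apply: eq_bigr => i _; rewrite ffunE.
Qed.

Lemma simplex_le_dimS (S : set (B -> R)) :
  (forall lam : 'I_(size Y) -> R, (forall i, 0 <= lam i) -> \sum_i lam i <= 1 ->
     S (fun b => w0 b + \sum_i lam i * Y`_i b)) ->
  (size Y <= dimS S)%N.
Proof.
move=> S_simplex; apply: (dimS_ge simplex_polyhedron _ simplex_vertexP).
  by move=> x /simplexP [lam [lam0 lam1] ->]; exact: S_simplex.
exact: simplex_vertex_aff_indep.
Qed.

End Simplex.

Section Pullback.
Variables (R : realType) (A B : finType) (g : B -> A).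

Definition pullback (x : {ffun A -> R^o}) : {ffun B -> R^o} := [ffun y => x (g y)].

Fact pullback_is_linear : linear pullback.
Proof. by move=> c x y; apply/ffunP => b; rewrite !ffunE. Qed.

HB.instance Definition _ := GRing.isSemilinear.Build R _ _ _ pullback
  (GRing.semilinear_linear pullback_is_linear).

Lemma pullbackE x y : linfun pullback x y = x (g y).
Proof. by rewrite lfunE ffunE. Qed.

End Pullback.

Section Subgrids.
Variables (R : realType) (n m : nat) (a : 'I_m -> R) (t : 'I_m -> 'I_n -> int).

Lemma at_ptE N (u : grid n N -> R) (w : 'I_n -> int) (x : grid n N) :
  (forall i, (x i : nat)%:Z = w i) -> at_pt u w = u x.
Proof.
move=> xw; rewrite /at_pt; case: pickP => [y /forallP yw|/(_ x)].
  congr u; apply/ffunP => i; apply: val_inj.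
  by have /eqP := yw i; rewrite -xw => -[].
by have -> : [forall i, (x i : nat)%:Z == w i] by apply/forallP => i; rewrite xw.
Qed.

Lemma embed_lt N q (v : 'I_n -> nat) (Hv : forall i, (v i + q <= N)%N)
    (y : grid n q) i :
  (v i + y i < N)%N.
Proof. by apply: leq_trans (Hv i); rewrite ltn_add2l. Qed.

Definition embed N q (v : 'I_n -> nat) (Hv : forall i, (v i + q <= N)%N)
    (y : grid n q) : grid n N :=
  [ffun i => Ordinal (embed_lt Hv y i)].

(* A shift s admissible for T_q gives the admissible shift s + v for T_N, and
   the corresponding linearizations coincide on the subgrid. *)
Lemma U_set_restrict N q (v : 'I_n -> nat) (Hv : forall i, (v i + q <= N)%N)
    (u : grid n N -> R) :
  U_set a t u -> U_set a t (fun y => u (embed Hv y)).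
Proof.
move=> Uu s adm.
have adm' : admissible_shift N t (fun i => s i + (v i)%:Z).
  by move=> j i; have [h1 h2] := adm j i; have h3 := Hv i; split; lia.
have shiftE j : at_pt (fun y => u (embed Hv y)) (fun i => t j i + s i) =
                at_pt u (fun i => t j i + (s i + (v i)%:Z)).
  have y_lt i : (absz (t j i + s i)%R < q)%N by have [h1 h2] := adm j i; lia.
  pose y : grid n q := [ffun i => Ordinal (y_lt i)].
  rewrite (@at_ptE _ _ _ y) ?(@at_ptE _ _ _ (embed Hv y)) // => i;
    rewrite !ffunE /= /y ?ffunE /=; have [h1 h2] := adm j i; lia.
have [j1 [j2 [ne [e mn]]]] := Uu _ adm'.
exists j1, j2; rewrite !shiftE; split => //; split => // j; rewrite shiftE; exact: mn.
Qed.

End Subgrids.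

Section Subadditivity.
Variables (R : realType) (n m : nat) (a : 'I_m -> R) (t : 'I_m -> 'I_n -> int).
Variables (N : nat) (J : finType) (q : J -> nat) (v : J -> 'I_n -> nat).
Hypothesis Hv : forall r i, (v r i + q r <= N)%N.
Hypothesis cover : forall x : grid n N, exists r (y : grid n (q r)), embed (Hv r) y = x.

Let restr r := linfun (@pullback R _ _ (embed (Hv r))).

(* Let P be a polyhedron inside U_N through the points p_0, ..., p_k. A basis Y
   of the restricted edge space can be chosen among restricted edges; the
   simplex spanned by Y at the restriction of p_0 is the restriction of a part
   of P, hence lies in U_(q_r), which bounds the dimension of that space. *)
Lemma restricted_edges_dim k (P : set (grid n N -> R)) (p : 'I_k.+1 -> grid n N -> R) r :
  polyhedron P -> P `<=` @U_set R n m a t N -> (forall j, P (p j)) ->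
  (\dim (restr r @: <<edges p>>) <= dimU a t (q r))%N.
Proof.
move=> Ppoly PU Pp; rewrite limg_span -size_greedy_basis.
set Y := greedy_basis _; pose e := embed (Hv r).
have restr_edge (i : 'I_(size Y)) : exists l : 'I_k, Y`_i = restr r (edges p)`_l.
  have /greedy_basis_sub/mapP [x x_edge ->] : Y`_i \in Y by apply: mem_nth.
  have l_lt : (index x (edges p) < k)%N.
    by have := index_mem x (edges p); rewrite x_edge size_tuple.
  by exists (Ordinal l_lt); rewrite /= nth_index.
have [sig sigE] := choice restr_edge.
apply: (simplex_le_dimS (w0 := fun y => p ord0 (e y)) (greedy_basis_free _)).
move=> lam lam0 lam1 /=.
set comb := fun b => p ord0 b + \sum_i lam i * (p (lift ord0 (sig i)) b - p ord0 b).
have comb_U : U_set a t comb.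
  exact/PU/(polyhedron_simplex_comb Ppoly (Pp ord0) (fun i => Pp (lift ord0 (sig i)))).
suff -> : (fun b => p ord0 (e b) + \sum_i lam i * Y`_i b) = (fun y => comb (e y)).
  exact: U_set_restrict comb_U.
apply: funext => y; congr (_ + _).
by apply: eq_bigr => i _; rewrite sigE pullbackE edgesE ffunE.
Qed.

Lemma dimU_subadditive : (dimU a t N <= \sum_r dimU a t (q r))%N.
Proof.
apply: dimS_le => k P p Ppoly PU Pp p_ind.
apply: (@leq_trans (\sum_r \dim (restr r @: <<edges p>>))); last first.
  by apply: leq_sum => r _; exact: restricted_edges_dim Ppoly PU Pp.
rewrite -[X in (X <= _)%N](size_tuple (edges p)) -(eqP (aff_indep_edges_free p_ind)).
apply: (@dim_le_sum_limg _ _ J _ restr) => u _ u0; apply/ffunP => x.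
have [r [y <-]] := cover x.
by have := congr1 (fun g : {ffun grid n (q r) -> R^o} => g y) (u0 r); rewrite pullbackE !ffunE.
Qed.

End Subadditivity.

Lemma expn_mono e x y : (y <= x)%N -> (y ^ e <= x ^ e)%N.
Proof. by case: e => [//|e] yx; rewrite leq_exp2r. Qed.

(* x^e - y^e <= e (x - y) x^(e-1), multiplied through by x. *)
Lemma expn_sub_bound e x y : (y <= x)%N -> (x * (x ^ e - y ^ e) <= e * (x - y) * x ^ e)%N.
Proof.
move=> yx; elim: e => [|e IH]; first by rewrite !expn0 subnn muln0.
have ye_xe : (y ^ e <= x ^ e)%N by apply: expn_mono.
rewrite !expnS; set A := (x ^ e)%N in IH ye_xe *; set C := (y ^ e)%N in IH ye_xe *.
have split_diff : (x * A - y * C = x * (A - C) + (x - y) * C)%N.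
  have h1 : (x * C <= x * A)%N by rewrite leq_mul2l ye_xe orbT.
  have h2 : (y * C <= x * C)%N by rewrite leq_mul2r yx orbT.
  rewrite mulnBr mulnBl; lia.
rewrite split_diff mulnDr.
have h3 : (x * ((x - y) * C) <= (x - y) * (x * A))%N.
  by rewrite mulnCA leq_mul2l leq_mul2l ye_xe !orbT.
have h4 : (x * (x * (A - C)) <= x * (e * (x - y) * A))%N by rewrite leq_mul2l IH orbT.
by apply: leq_trans (leq_add h4 h3) _; rewrite mulSn mulnDl; nia.
Qed.

Section Tiling.
Variables (R : realType) (n m : nat) (a : 'I_m -> R) (t : 'I_m -> 'I_n -> int).

Lemma card_grid N : #|grid n N| = (N ^ n)%N.
Proof. by rewrite card_ffun !card_ord. Qed.

Lemma dimU_le_card N : (dimU a t N <= N ^ n)%N.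
Proof.
rewrite /dimU /dimS; apply/bigmax_leqP => k _; rewrite -card_grid -ltnS.
exact: ltn_ord.
Qed.

Variables (M N : nat).
Local Notation k := (N %/ M)%N.

(* T_N is covered by the k^n cubes of side M tiling T_(kM), together with
   one cube of side 1 for each point outside T_(kM). *)
Definition inner (x : grid n N) : bool := [forall i, (x i < k * M)%N].
Definition tile := (grid n k + {x : grid n N | ~~ inner x})%type.
Definition tile_side (r : tile) : nat := if r is inl _ then M else 1%N.
Definition tile_origin (r : tile) (i : 'I_n) : nat :=
  match r with inl c => (c i * M)%N | inr x => ((val x) i : nat) end.

Lemma tile_fits r i : (tile_origin r i + tile_side r <= N)%N.
Proof.
case: r => [c|x] /=; last by rewrite addn1; exact: ltn_ord.
by have := ltn_ord (c i); have := leq_divM N M; nia.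
Qed.

Lemma tiles_cover (M_gt0 : (0 < M)%N) (x : grid n N) :
  exists r (y : grid n (tile_side r)), embed (tile_fits r) y = x.
Proof.
case x_in : (inner x).
  have c_lt i : (x i %/ M < k)%N.
    by rewrite ltn_divLR //; move/forallP: x_in => /(_ i).
  have y_lt i : (x i %% M < M)%N by rewrite ltn_mod.
  exists (inl [ffun i => Ordinal (c_lt i)]), ([ffun i => Ordinal (y_lt i)] : grid n M).
  by apply/ffunP => i; apply: val_inj; rewrite !ffunE /= !ffunE /= -divn_eq.
exists (inr (exist _ x (negbT x_in))), ([ffun i => ord0] : grid n 1).
by apply/ffunP => i; apply: val_inj; rewrite !ffunE /= !ffunE /= addn0.
Qed.

Lemma card_outer : (#|{: {x : grid n N | ~~ inner x}}| <= N ^ n - (k * M) ^ n)%N.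
Proof.
have kM_N : (k * M <= N)%N := leq_divM N M.
have inner_embed (y : grid n (k * M)) : inner [ffun i => widen_ord kM_N (y i)].
  by apply/forallP => i; rewrite ffunE /=.
pose g y := exist (fun x => inner x) _ (inner_embed y).
have g_inj : injective g.
  move=> y1 y2 /(congr1 val) /= /ffunP e; apply/ffunP => i; apply: val_inj.
  by have := e i; rewrite !ffunE => /(congr1 val).
have inner_card : ((k * M) ^ n <= #|[pred x | inner x]|)%N.
  by rewrite -card_grid; apply: leq_trans (leq_card g g_inj) _; rewrite card_sig.
have -> : #|{: {x : grid n N | ~~ inner x}}| = (N ^ n - #|[pred x | inner x]|)%N.
  rewrite card_sig -(card_grid N) -(cardC [pred x | inner x]) addKn.
  by apply: eq_card => x; rewrite !inE.
exact: leq_sub2l.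
Qed.

Lemma dimU_tiling_bound (M_gt0 : (0 < M)%N) :
  (dimU a t N <= k ^ n * dimU a t M + (N ^ n - (k * M) ^ n))%N.
Proof.
apply: leq_trans (dimU_subadditive a t (tiles_cover M_gt0)) _.
rewrite big_sumType /=; apply: leq_add; first by rewrite sum_nat_const card_grid.
apply: leq_trans card_outer; rewrite -[X in (_ <= X)%N]muln1 -sum_nat_const.
by apply: leq_sum => x _; have := dimU_le_card 1; rewrite exp1n.
Qed.

End Tiling.

Lemma ratio_le (R : realType) (x y z A B C : nat) :
  (0 < A)%N -> (0 < B)%N -> (0 < C)%N ->
  (x * B * C <= y * A * C + z * A * B)%N ->
  (x%:R / A%:R <= y%:R / B%:R + z%:R / C%:R :> R).
Proof.
move=> A0 B0 C0 h.
rewrite addf_div ?pnatr_eq0 -?lt0n // ler_pdivrMr ?ltr0n // mulrAC.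
by rewrite ler_pdivlMr ?mulr_gt0 ?ltr0n // -!natrM -natrD -natrM ler_nat; nia.
Qed.

(* The normalized dimensions satisfy
     dim U_N / N^n <= dim U_M / M^n + n M / N,
   since the cubes of side M fill T_N up to a boundary layer of relative size
   at most n M / N. *)
Lemma dimU_ratio_bound (R : realType) n m (a : 'I_m -> R) (t : 'I_m -> 'I_n -> int)
    M N :
  (0 < M)%N -> (0 < N)%N ->
  ((dimU a t N)%:R / (N ^ n)%:R <= (dimU a t M)%:R / (M ^ n)%:R + (n * M)%:R / N%:R :> R).
Proof.
move=> M0 N0; apply: ratio_le; rewrite ?expn_gt0 ?M0 ?N0 //.
have tiling := dimU_tiling_bound a t N M0; set k := (N %/ M)%N in tiling *.
have kM_N : (k * M <= N)%N := leq_divM N M.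
have rest_M : (N - k * M <= M)%N.
  by rewrite {1}(divn_eq N M) -/k addKn ltnW // ltn_mod.
have layer : (N * (N ^ n - (k * M) ^ n) <= n * M * N ^ n)%N.
  by apply: leq_trans (expn_sub_bound n kM_N) _; rewrite leq_mul2r leq_mul2l rest_M !orbT.
have cubes : (k ^ n * M ^ n <= N ^ n)%N by rewrite -expnMn; apply: expn_mono.
move: tiling layer cubes; move: (dimU a t N) (dimU a t M) (k ^ n)%N (M ^ n)%N.
move: (N ^ n)%N (N ^ n - (k * M) ^ n)%N => Nn E DN DM K Mn tiling layer cubes.
apply: leq_trans (_ : ((K * DM + E) * Mn * N <= _)%N); first by rewrite !leq_mul2r tiling !orbT.
rewrite !mulnDl; apply: leq_add.
  by rewrite [(K * DM)%N]mulnC -[(DM * K * Mn)%N]mulnA leq_mul2r leq_mul2l cubes !orbT.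
by rewrite mulnAC [(E * N)%N]mulnC leq_mul2r layer orbT.
Qed.

Lemma cvg_to_inf (R : realType) (u C : nat -> R) :
  (forall N, 0 <= u N) -> (forall M N, u N <= u M + C M / N.+1%:R) ->
  u @ \oo --> inf [set u N | N in [set: nat]].
Proof.
move=> u_ge0 u_defect; set E := [set u N | N in [set: nat]].
have E_lb : has_lbound E by exists 0 => y [N _ <-].
have E_inf : has_inf E by split => //; exists (u 0%N), 0%N.
apply/cvgrPdist_lt => e e0; have e2 : 0 < e / 2 by rewrite divr_gt0.
have [y [M _ <-] uM] := inf_adherent e2 E_inf.
have := nbhs_infty_ge (Num.Def.truncn (C M / (e / 2))); apply: filterS => N MN.
rewrite distrC ger0_norm ?subr_ge0 ?(ge_inf E_lb) //; last by exists N.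
rewrite ltrBlDl; apply: le_lt_trans (u_defect M N) _.
rewrite [e]splitr addrA ltrD // ltr_pdivrMr ?ltr0n // mulrC -ltr_pdivrMr //.
by apply: lt_le_trans (truncnS_gt _) _; rewrite ler_nat.
Qed.

Theorem mainTheorem1 (R : realType) (n m : nat) (a : 'I_m -> R)
    (t : 'I_m -> 'I_n -> int)
    (hm : (0 < m)%N)
    (hdist : forall j1 j2 : 'I_m, (forall i, t j1 i = t j2 i) -> j1 = j2) :
  (* subadditivity over partitions of T_N into cubical subgrids *)
  (forall (N : nat) (RR : nat) (q : 'I_RR -> nat) (v : 'I_RR -> 'I_n -> nat),
     (0 < N)%N ->
     (forall r, 0 < q r)%N ->
     (forall r i, v r i + q r <= N)%N ->
     (forall x : grid n N, exists! r : 'I_RR,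
        forall i, (v r i <= x i < v r i + q r)%N) ->
     (dimU a t N <= \sum_(r < RR) dimU a t (q r))%N)
  /\
  (* the limit H(f) of dim(U_N)/N^n exists and equals the infimum *)
  ((fun N : nat => ((dimU a t N.+1)%:R / ((N.+1) ^ n)%:R : R)) @ \oo
     --> inf [set ((dimU a t N.+1)%:R / ((N.+1) ^ n)%:R : R) | N in [set: nat]]).
Proof.
split.
  move=> N RR q v _ _ Hv partition; apply: (dimU_subadditive a t (Hv := Hv)) => x.
  have [r [x_in _]] := partition x.
  have y_lt i : (x i - v r i < q r)%N by have /andP[] := x_in i; lia.
  exists r, [ffun i => Ordinal (y_lt i)].
  apply/ffunP => i; apply: val_inj; rewrite !ffunE /= !ffunE /=.
  by have /andP[] := x_in i; lia.
apply: (cvg_to_inf (C := fun M => (n * M.+1)%:R)) => [N|M N].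
  by rewrite divr_ge0 ?ler0n.
exact: dimU_ratio_bound.
Qed.
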